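(* Let $(\mathcal S,\mathcal A,H,P,R,\mu)$ be an episodic tabular MDP as in the context. Suppose the actions do not affect the transitions, i.e., $P_h(s'\mid s,a)=P_h(s'\mid s)$ for all $h,s,a,s'$. Then $CR^L(P)=\frac1A$ for every $L\in[H]$.
   Context: Episodic tabular MDP $(\mathcal S,\mathcal A,H,P,R,\mu)$: finite state space $\mathcal S$ with $|\mathcal S|=S$, finite action space $\mathcal A$ with $|\mathcal A|=A$, horizon $H\in\mathbb N$, transition kernels $P_h(\cdot\mid s,a)$, initial state distribution $\mu$, and random non-negative rewards $R_h(s,a)$ for $(h,s,a)\in\mathcal X:=[H]\times\mathcal S\times\mathcal A$. Initially $s_1\sim\mu$; at step $h$ the agent in state $s_h$ picks $a_h$, receives $R_h(s_h,a_h)$ and moves to $s_{h+1}\sim P_h(\cdot\mid s_h,a_h)$. All rewards are drawn before the interaction. The vectors $\mathcal R_h=\{R_h(s,a)\}_{s,a}$ for different $h$ are mutually independent (entries of one $\mathcal R_h$ may be arbitrarily correlated); rewards are independent of transitions, and transitions are independent across steps. Let $r_h(s,a)=\mathbb E[R_h(s,a)]$ and let $\mathcal D(r)$ denote the set of all such reward distributions with means $r$. For $L\in\{0,\dots,H\}$ an $L$-lookahead policy draws $a_h\sim\pi_h(\cdot\mid s_h,\mathcal R_h^L)$, where $\mathcal R_h^L=(\mathcal R_t)_{h\le t\le\min(h+L-1,H)}$ and $\mathcal R_h^0=\emptyset$; $\Pi^L$ is the set of these policies. The value is $V^{L,\pi}(P,r)=\mathbb E[\sum_{h=1}^H R_h(s_h,a_h)]$,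 and $V^{L,*}(P,r)=\sup_{\pi\in\Pi^L}V^{L,\pi}(P,r)$. The competitive ratio is $CR^L(P,r)=\inf_{\mathcal D(r)}V^{0,*}(P,r)/V^{L,*}(P,r)$, with the convention that any division by zero equals $+\infty$. Also $CR^L(P)=\inf\{CR^L(P,r): r_h\in[0,1]^{SA}\ \forall h\}$. *)

From HB Require Import structures.
From mathcomp Require Import all_boot all_order all_algebra.
From mathcomp Require Import all_classical all_reals all_analysis.
Set Implicit Arguments. Unset Strict Implicit. Unset Printing Implicit Defensive.
Import Order.TTheory GRing.Theory Num.Theory.
Local Open Scope classical_set_scope.
Local Open Scope ring_scope.

(* Steps h = 1..H of the paper are indexed 0..H-1 here (h < H).            *)
Section EpisodicMDP.
Variables (R : realType) (S A : finType) (H : nat).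

Definition is_distr (mu : S -> R) : Prop :=
  (forall s, 0 <= mu s) /\ \sum_(s : S) mu s = 1.

Definition is_kernel (P : nat -> S -> A -> S -> R) : Prop :=
  forall h, (h < H)%N -> forall s a,
    (forall s', 0 <= P h s a s') /\ \sum_(s' : S) P h s a s' = 1.

Definition action_independent (P : nat -> S -> A -> S -> R) : Prop :=
  forall h, (h < H)%N -> forall s a a' s', P h s a s' = P h s a' s'.

(* The lookahead window R_h^L = (R_t)_{h <= t <= min(h+L-1, H)} seen at step h,
   encoded as a function of the offset k = t - h; entries outside the window
   are masked to the constant 0 (so a policy cannot depend on them). *)
Definition window {T : Type} (L : nat) (Rw : nat -> S -> A -> T -> R) (w : T)
  (h : nat) : nat -> S -> A -> R :=
  fun k s a => if ((k < L) && (h + k < H))%N then Rw (h + k)%N s a w else 0.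

(* A (randomized) lookahead policy: pi h s W a = pi_h(a | s, W). *)
Definition policy := nat -> S -> (nat -> S -> A -> R) -> A -> R.

Definition is_policy (pi : policy) : Prop :=
  forall h s W, (forall a, 0 <= pi h s W a) /\ \sum_(a : A) pi h s W a = 1.

Definition traj := {ffun 'I_H -> S * A}.

Definition traj_prob {T : Type} (mu : S -> R) (P : nat -> S -> A -> S -> R)
  (L : nat) (Rw : nat -> S -> A -> T -> R) (pi : policy) (w : T) (tau : traj) : R :=
  (\prod_(i : 'I_H | val i == 0%N) mu (tau i).1) *
  (\prod_(i : 'I_H) pi i (tau i).1 (window L Rw w i) (tau i).2) *
  (\prod_(i : 'I_H) \prod_(j : 'I_H | val j == (val i).+1)
      P i (tau i).1 (tau i).2 (tau j).1).

Definition traj_return {T : Type} (Rw : nat -> S -> A -> T -> R) (w : T)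
  (tau : traj) : R :=
  \sum_(i : 'I_H) Rw i (tau i).1 (tau i).2 w.

Definition value (d : measure_display) (Om : measurableType d)
  (Pr : probability Om R) (mu : S -> R) (P : nat -> S -> A -> S -> R)
  (L : nat) (Rw : nat -> S -> A -> Om -> R) (pi : policy) : \bar R :=
  (\int[Pr]_w (\sum_(tau : traj)
      traj_prob mu P L Rw pi w tau * traj_return Rw w tau)%:E)%E.

Definition admissible (d : measure_display) (Om : measurableType d)
  (L : nat) (Rw : nat -> S -> A -> Om -> R) (pi : policy) : Prop :=
  is_policy pi /\
  forall h s a, (h < H)%N ->
    measurable_fun setT (fun w => pi h s (window L Rw w h) a).

Definition opt_value (d : measure_display) (Om : measurableType d)
  (Pr : probability Om R) (mu : S -> R) (P : nat -> S -> A -> S -> R)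
  (L : nat) (Rw : nat -> S -> A -> Om -> R) : \bar R :=
  ereal_sup ((value Pr mu P L Rw) @` [set pi | admissible L Rw pi]).

(* the reward vectors R_h = {R_h(s,a)}_{s,a}, h < H, are mutually independent
   (product rule on rectangles, which generate the product sigma-algebra) *)
Definition rewards_indep (d : measure_display) (Om : measurableType d)
  (Pr : probability Om R) (Rw : nat -> S -> A -> Om -> R) : Prop :=
  forall B : nat -> S -> A -> set R, (forall h s a, measurable (B h s a)) ->
    Pr [set w | forall h, (h < H)%N -> forall s a, B h s a (Rw h s a w)] =
    (\prod_(h < H) Pr [set w | forall s a, B h s a (Rw h s a w)])%E.

Definition reward_model (d : measure_display) (Om : measurableType d)
  (Pr : probability Om R) (Rw : nat -> S -> A -> Om -> R)
  (r : nat -> S -> A -> R) : Prop :=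
  [/\ forall h s a, (h < H)%N -> measurable_fun setT (Rw h s a),
      forall h s a w, (h < H)%N -> 0 <= Rw h s a w,
      forall h s a, (h < H)%N -> (\int[Pr]_w (Rw h s a w)%:E)%E = (r h s a)%:E
    & rewards_indep Pr Rw].

Definition eratio (x y : \bar R) : \bar R :=
  if y == 0%E then +oo%E else (x * y^-1)%E.

Definition CR_r (L : nat) (mu : S -> R) (P : nat -> S -> A -> S -> R)
  (r : nat -> S -> A -> R) : \bar R :=
  ereal_inf [set c | exists (d : measure_display) (Om : measurableType d)
     (Pr : probability Om R) (Rw : nat -> S -> A -> Om -> R),
     reward_model Pr Rw r /\
     c = eratio (opt_value Pr mu P 0 Rw) (opt_value Pr mu P L Rw)].

Definition CR (L : nat) (mu : S -> R) (P : nat -> S -> A -> S -> R) : \bar R :=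
  ereal_inf [set c | exists r : nat -> S -> A -> R,
     (forall h s a, (h < H)%N -> 0 <= r h s a <= 1) /\ c = CR_r L mu P r].

End EpisodicMDP.

From HB Require Import structures.
From mathcomp Require Import all_boot all_order all_algebra.
From mathcomp Require Import all_classical all_reals all_analysis.
From mathcomp Require Import measurable_realfun.
Set Implicit Arguments. Unset Strict Implicit. Unset Printing Implicit Defensive.
Import Order.TTheory GRing.Theory Num.Theory.
Local Open Scope classical_set_scope.
Local Open Scope ring_scope.

(* Since actions do not influence transitions, the state path is a Markov chain
   that no policy can affect, and the value of a lookahead policy [pi] is the
   expectation, over state paths and rewards, of [sum_h sum_a pi_h(a) R_h(s_h, a)].
   Bounding [pi_h(a)] by [1] shows that no policy beats
   [Y = E[sum_h sum_a r_h(s_h, a)]], whereas the uniform policy, which needs no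
   lookahead, earns [Y / A]; hence [CR^L(P) >= 1/A].  Conversely, let the only
   reward be at the first step, where one uniformly random action pays [A]:
   without lookahead every policy earns [1] on average, while a policy that sees
   the current rewards earns [A]. *)

Lemma exists_gt0_of_sum1 (R : numDomainType) (I : finType) (F : I -> R) :
  (forall i, 0 <= F i) -> \sum_i F i = 1 -> exists i, 0 < F i.
Proof.
move=> F0 F1; have [/existsP //|/existsPn Fle0] := boolP [exists i, 0 < F i].
suff : \sum_i F i = 0 by rewrite F1 => /eqP; rewrite oner_eq0.
apply: big1 => i _; have := F0 i.
by rewrite le_eqVlt (negbTE (Fle0 i)) orbF => /eqP ->.
Qed.

Lemma marginal_ffun_prod (R : comNzRingType) (I J : finType)
    (F : I -> J -> R) (g : J -> R) (j : I) :
  (forall i, \sum_a F i a = 1) ->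
  \sum_(f : {ffun I -> J}) (\prod_i F i (f i)) * g (f j) = \sum_a F j a * g a.
Proof.
move=> F1; pose G i a := F i a * (if i == j then g a else 1).
have -> : \sum_a F j a * g a = \prod_i \sum_a G i a.
  rewrite [RHS](bigD1 j) //= [X in _ * X]big1 => [|i /negbTE ij]; last first.
    by rewrite -(F1 i); apply: eq_bigr => a _; rewrite /G ij mulr1.
  by rewrite mulr1; apply: eq_bigr => a _; rewrite /G eqxx.
rewrite bigA_distr_bigA; apply: eq_bigr => f _; rewrite /G big_split /=.
by rewrite -big_mkcond big_pred1_eq.
Qed.

Lemma integral_sum_scale d (T : measurableType d) (R : realType)
    (mu : {measure set T -> \bar R}) (I : finType) (c : I -> R)
    (F : I -> T -> R) (m : I -> R) :
  (forall i, 0 <= c i) -> (forall i, measurable_fun setT (F i)) ->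
  (forall i x, 0 <= F i x) ->
  (forall i, (\int[mu]_x (F i x)%:E = (m i)%:E)%E) ->
  (\int[mu]_x (\sum_i c i * F i x)%:E = (\sum_i c i * m i)%:E)%E.
Proof.
move=> c0 mF F0 intF; under eq_integral do rewrite -sumEFin.
rewrite ge0_integral_sum // => [|i|i x _]; last 2 first.
- by apply/measurable_EFinP/measurable_funM => //; exact: measurable_cst.
- by rewrite lee_fin mulr_ge0.
rewrite -sumEFin; apply: eq_bigr => i _; under eq_integral do rewrite EFinM.
rewrite ge0_integralZl_EFin ?intF // => [x _|]; first by rewrite lee_fin.
exact/measurable_EFinP.
Qed.

Lemma probability_prod_trivial d (T : measurableType d) (R : realType)
    (Pr : probability T R) (N : nat) (E : nat -> set T) (h0 : 'I_N) :
  (forall h : 'I_N, h != h0 -> E h = setT \/ E h = set0) ->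
  Pr [set x | forall h, (h < N)%N -> E h x] = (\prod_(h < N) Pr (E h))%E.
Proof.
move=> Etriv.
have [[h [hh0 Eh]]|Enot0] := pselect (exists h : 'I_N, h != h0 /\ E h = set0).
  rewrite (bigD1 h) //= Eh measure0 mul0e (_ : [set x : T | _] = set0) ?measure0 //.
  by apply/seteqP; split=> x // /(_ h (ltn_ord h)); rewrite Eh.
have ET (h : 'I_N) : h != h0 -> E h = setT.
  by move=> hh0; case: (Etriv h hh0) => // Eh; exfalso; apply: Enot0; exists h.
rewrite (bigD1 h0) //= big1 ?mule1 => [|h /ET ->]; last exact: probability_setT.
congr (Pr _); apply/seteqP; split=> [x /(_ _ (ltn_ord h0)) //|x Ex h hN].
have [<- //|ne] := eqVneq (nat_of_ord h0) h.
by rewrite (ET (Ordinal hN)) // -(inj_eq val_inj) /= eq_sym.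
Qed.

Section uniform_ord_prob.
Variables (R : realType) (m : nat).

Let weight_ge0 : 0 <= (m.+1%:R : R)^-1. Proof. by rewrite invr_ge0. Qed.

Definition uniform_ord_prob : set nat -> \bar R :=
  msum (fun k => mscale (NngNum weight_ge0) \d_k) m.+1.

HB.instance Definition _ := Measure.copy uniform_ord_prob
  (msum (fun k => mscale (NngNum weight_ge0) \d_k) m.+1).

Lemma integral_uniform_ord_prob (f : nat -> R) : (forall k, 0 <= f k) ->
  (\int[uniform_ord_prob]_x (f x)%:E =
   (\sum_(k < m.+1) (m.+1%:R)^-1 * f k)%:E)%E.
Proof.
move=> f0; rewrite ge0_integral_measure_sum // => [|k _]; last by rewrite lee_fin.
rewrite -sumEFin; apply: eq_bigr => k _.
rewrite ge0_integral_mscale ?integral_dirac ?diracT ?mul1e // => x _.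
by rewrite lee_fin.
Qed.

Let uniform_ord_prob_setT : uniform_ord_prob setT = 1%E.
Proof.
rewrite -[uniform_ord_prob _]mul1e -integral_cst //.
rewrite integral_uniform_ord_prob // -big_distrr /= sumr_const card_ord.
by rewrite mulVf // pnatr_eq0.
Qed.

HB.instance Definition _ :=
  Measure_isProbability.Build _ _ R uniform_ord_prob uniform_ord_prob_setT.

End uniform_ord_prob.

Section action_independent_mdp.
Variables (R : realType) (S A : finType) (H : nat) (mu : S -> R)
  (P : nat -> S -> A -> S -> R) (a0 : A).
Hypothesis mu_ge0 : forall s, 0 <= mu s.
Hypothesis P_ge0 : forall h, (h < H)%N -> forall s a s', 0 <= P h s a s'.
Hypothesis P_indep : action_independent H P.

(* Under [P_indep] the action [a0] is irrelevant. *)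
Definition path_weight (sg : {ffun 'I_H -> S}) : R :=
  (\prod_(i : 'I_H | val i == 0%N) mu (sg i)) *
  \prod_(i : 'I_H) \prod_(j : 'I_H | val j == (val i).+1) P i (sg i) a0 (sg j).

Definition path_sum (q x : nat -> S -> A -> R) : R :=
  \sum_(sg : {ffun 'I_H -> S}) path_weight sg *
    \sum_(j : 'I_H) \sum_a q j (sg j) a * x j (sg j) a.

Lemma path_weight_ge0 sg : 0 <= path_weight sg.
Proof.
apply: mulr_ge0; apply: prodr_ge0 => i _ //.
by apply: prodr_ge0 => j _; exact: P_ge0.
Qed.

Lemma sum_path_weight_gt0 : is_distr mu -> is_kernel H P ->
  0 < \sum_(sg : {ffun 'I_H -> S}) path_weight sg.
Proof.
move=> [_ mu1] P_kernel.
have [s0 mu_s0] := exists_gt0_of_sum1 mu_ge0 mu1.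
pose next k s := odflt s [pick s' | 0 < P k s a0 s'].
have P_next k s : (k < H)%N -> 0 < P k s a0 (next k s).
  move=> kH; rewrite /next; case: pickP => [//|P_le0] /=.
  have [P0 P1] := P_kernel k kH s a0.
  by have [s'] := exists_gt0_of_sum1 P0 P1; rewrite (P_le0 s').
pose walk := fix walk k := if k is k'.+1 then next k' (walk k') else s0.
pose sg := [ffun i : 'I_H => walk i].
have weight_sg : 0 < path_weight sg.
  apply: mulr_gt0; apply: prodr_gt0 => i; first by move=> /eqP i0; rewrite ffunE i0.
  move=> _; apply: prodr_gt0 => j /eqP ji; rewrite !ffunE ji.
  exact: P_next (ltn_ord i).
apply: lt_le_trans weight_sg _; rewrite (bigD1 sg) //= lerDl.
by apply: sumr_ge0 => ? _; exact: path_weight_ge0.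
Qed.

Lemma path_sum_ge0 (q x : nat -> S -> A -> R) :
  (forall (j : 'I_H) s a, 0 <= q j s a) -> (forall (j : 'I_H) s a, 0 <= x j s a) ->
  0 <= path_sum q x.
Proof.
move=> q0 x0; apply: sumr_ge0 => sg _; rewrite mulr_ge0 ?path_weight_ge0 //.
by apply: sumr_ge0 => j _; apply: sumr_ge0 => a _; rewrite mulr_ge0.
Qed.

Lemma ler_path_sum (q q' x : nat -> S -> A -> R) :
  (forall (j : 'I_H) s a, q j s a <= q' j s a) ->
  (forall (j : 'I_H) s a, 0 <= x j s a) ->
  path_sum q x <= path_sum q' x.
Proof.
move=> qq' x0; apply: ler_sum => sg _; rewrite ler_wpM2l ?path_weight_ge0 //.
by apply: ler_sum => j _; apply: ler_sum => a _; rewrite ler_wpM2r.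
Qed.

Lemma path_sum_const c (x : nat -> S -> A -> R) :
  path_sum (fun _ _ _ => c) x = c * path_sum (fun _ _ _ => 1) x.
Proof.
rewrite /path_sum [RHS]big_distrr; apply: eq_bigr => sg _; rewrite [RHS]mulrCA.
congr (_ * _); rewrite [RHS]big_distrr; apply: eq_bigr => j _.
by rewrite [RHS]big_distrr /=; apply: eq_bigr => a _; rewrite mul1r.
Qed.

Lemma path_sum_action_free (q : nat -> S -> A -> R) (y : nat -> S -> R) :
  (forall (j : 'I_H) s, \sum_a q j s a = 1) ->
  path_sum q (fun j s _ => y j s) =
  \sum_(sg : {ffun 'I_H -> S}) path_weight sg * \sum_(j : 'I_H) y j (sg j).
Proof.
move=> q1; apply: eq_bigr => sg _; congr (_ * _); apply: eq_bigr => j _.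
by rewrite -big_distrl /= q1 mul1r.
Qed.

Lemma integral_path_sum d (T : measurableType d) (Pr : {measure set T -> \bar R})
    (X : nat -> S -> A -> T -> R) (x q : nat -> S -> A -> R) :
  (forall (j : 'I_H) s a, measurable_fun setT (X j s a)) ->
  (forall (j : 'I_H) s a t, 0 <= X j s a t) ->
  (forall (j : 'I_H) s a, (\int[Pr]_t (X j s a t)%:E = (x j s a)%:E)%E) ->
  (forall (j : 'I_H) s a, 0 <= q j s a) ->
  (\int[Pr]_t (path_sum q (fun j s a => X j s a t))%:E = (path_sum q x)%:E)%E.
Proof.
move=> mX X0 intX q0.
have path_sumE y : path_sum q y = \sum_(sg : {ffun 'I_H -> S}) path_weight sg *
    \sum_(p : 'I_H * A) q p.1 (sg p.1) p.2 * y p.1 (sg p.1) p.2.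
  by apply: eq_bigr => sg _; rewrite pair_bigA.
under eq_integral do rewrite path_sumE.
rewrite path_sumE; apply: integral_sum_scale => [sg|sg|sg t|sg].
- exact: path_weight_ge0.
- by apply: measurable_sum => p; apply: measurable_funM => //; exact: measurable_cst.
- by apply: sumr_ge0 => p _; rewrite mulr_ge0.
- exact: integral_sum_scale.
Qed.

Lemma measurable_path_sum d (T : measurableType d) (Q X : nat -> S -> A -> T -> R) :
  (forall (j : 'I_H) s a, measurable_fun setT (Q j s a)) ->
  (forall (j : 'I_H) s a, measurable_fun setT (X j s a)) ->
  measurable_fun setT
    (fun t => path_sum (fun j s a => Q j s a t) (fun j s a => X j s a t)).
Proof.
move=> mQ mX; apply: measurable_sum => sg; apply: measurable_funM.
  exact: measurable_cst.
by apply: measurable_sum => j; apply: measurable_sum => a; exact: measurable_funM.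
Qed.

Definition policy_return {T : Type} L (Rw : nat -> S -> A -> T -> R)
    (pi : policy R S A) (w : T) : R :=
  path_sum (fun j s a => pi j s (window H L Rw w j) a) (fun j s a => Rw j s a w).

Definition traj_of (sg : {ffun 'I_H -> S}) (al : {ffun 'I_H -> A}) : traj S A H :=
  [ffun i => (sg i, al i)].

Lemma traj_prob_pair {T : Type} L (Rw : nat -> S -> A -> T -> R) pi w
    (sg : {ffun 'I_H -> S}) (al : {ffun 'I_H -> A}) :
  traj_prob mu P L Rw pi w (traj_of sg al) =
  path_weight sg * \prod_(i : 'I_H) pi i (sg i) (window H L Rw w i) (al i).
Proof.
rewrite /traj_prob /path_weight /traj_of mulrAC; congr (_ * _ * _).
- by apply: eq_bigr => i _; rewrite ffunE.
- apply: eq_bigr => i _; apply: eq_bigr => j _; rewrite !ffunE /=.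
  exact: P_indep (ltn_ord i) _ _ _ _.
- by apply: eq_bigr => i _; rewrite ffunE.
Qed.

Lemma sum_traj_return {T : Type} L (Rw : nat -> S -> A -> T -> R) pi w :
  is_policy pi ->
  \sum_(tau : traj S A H) traj_prob mu P L Rw pi w tau * traj_return Rw w tau =
  policy_return L Rw pi w.
Proof.
move=> pi_policy.
rewrite (reindex (fun p => traj_of p.1 p.2)) /=; last first.
  exists (fun tau => ([ffun i => (tau i).1], [ffun i => (tau i).2])).
    by move=> [sg al] _; congr pair; apply/ffunP => i; rewrite !ffunE.
  by move=> tau _; apply/ffunP => i; rewrite !ffunE; case: (tau i).
rewrite -(pair_bigA _ (fun sg al => traj_prob mu P L Rw pi w (traj_of sg al) *
  traj_return Rw w (traj_of sg al))) /=.
apply: eq_bigr => sg _.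
under eq_bigr => al _.
  rewrite traj_prob_pair -mulrA /traj_return big_distrr /=.
  under eq_bigr do rewrite ffunE /=.
over.
rewrite -big_distrr /=; congr (_ * _); rewrite exchange_big /=.
apply: eq_bigr => j _.
rewrite (@marginal_ffun_prod R 'I_H A (fun i a => pi i (sg i) (window H L Rw w i) a)
  (fun a => Rw j (sg j) a w)) // => i.
by have [] := pi_policy i (sg i) (window H L Rw w i).
Qed.

Lemma policy_le1 (pi : policy R S A) h s W a : is_policy pi -> pi h s W a <= 1.
Proof.
move=> /(_ h s W) [pi_ge0 pi_sum1]; rewrite -pi_sum1 (bigD1 a) //= lerDl.
by apply: sumr_ge0 => b _.
Qed.

Hypothesis A_gt0 : (0 < #|A|)%N.

Definition uniform_policy : policy R S A := fun _ _ _ _ => (#|A|%:R)^-1.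

Lemma uniform_policy_admissible d (Om : measurableType d) L
    (Rw : nat -> S -> A -> Om -> R) :
  admissible H L Rw uniform_policy.
Proof.
split=> [h s W|h s a _]; last exact: measurable_cst.
split=> [a|]; first by rewrite invr_ge0.
rewrite sumr_const; change ((#|A|%:R)^-1 *+ #|A| = 1 :> R).
by rewrite -(mulr_natr (#|A|%:R)^-1) mulVf // pnatr_eq0 -lt0n.
Qed.

Section reward_model.
Variables (d : measure_display) (Om : measurableType d) (Pr : probability Om R)
  (Rw : nat -> S -> A -> Om -> R) (r : nat -> S -> A -> R).
Hypothesis Rw_model : reward_model H Pr Rw r.

Let Rw_measurable (j : 'I_H) s a : measurable_fun setT (Rw j s a).
Proof. by case: Rw_model => mRw _ _ _; exact: mRw (ltn_ord j). Qed.

Let Rw_ge0 (j : 'I_H) s a w : 0 <= Rw j s a w.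
Proof. by case: Rw_model => _ Rw0 _ _; exact: Rw0 (ltn_ord j). Qed.

Let Rw_mean (j : 'I_H) s a : (\int[Pr]_w (Rw j s a w)%:E = (r j s a)%:E)%E.
Proof. by case: Rw_model => _ _ intRw _; exact: intRw (ltn_ord j). Qed.

Let r_ge0 (j : 'I_H) s a : 0 <= r j s a.
Proof. by rewrite -lee_fin -Rw_mean; apply: integral_ge0 => w _; rewrite lee_fin. Qed.

Definition total_mean := path_sum (fun _ _ _ => 1) r.

Lemma value_policy_return L pi : is_policy pi ->
  value H Pr mu P L Rw pi = (\int[Pr]_w (policy_return L Rw pi w)%:E)%E.
Proof. by move=> pi_policy; apply: eq_integral => w _; rewrite sum_traj_return. Qed.

Lemma value_le_total_mean L pi : admissible H L Rw pi ->
  (value H Pr mu P L Rw pi <= total_mean%:E)%E.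
Proof.
move=> [pi_policy pi_measurable]; rewrite value_policy_return //.
rewrite -(integral_path_sum (q := fun _ _ _ => 1) Rw_measurable Rw_ge0 Rw_mean) //.
have pi_ge0 j s W a : 0 <= pi j s W a by have [] := pi_policy j s W.
apply: ge0_le_integral => //.
- by move=> w _; rewrite lee_fin path_sum_ge0.
- apply/measurable_EFinP/measurable_path_sum => // j s a.
  exact: pi_measurable (ltn_ord j).
- by apply/measurable_EFinP/measurable_path_sum => // j s a; exact: measurable_cst.
- move=> w _; rewrite lee_fin ler_path_sum // => j s a.
  exact: policy_le1.
Qed.

Lemma value_uniform_policy L :
  value H Pr mu P L Rw uniform_policy = ((#|A|%:R)^-1 * total_mean)%:E.
Proof.
rewrite value_policy_return; last by case: (uniform_policy_admissible L Rw).
rewrite (integral_path_sum (q := fun _ _ _ => (#|A|%:R)^-1)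
  Rw_measurable Rw_ge0 Rw_mean) //.
by rewrite path_sum_const.
Qed.

Lemma value_no_lookahead pi : admissible H 0 Rw pi ->
  value H Pr mu P 0 Rw pi =
  (path_sum (fun j s a => pi j s (fun _ _ _ => 0) a) r)%:E.
Proof.
case=> pi_policy _; rewrite value_policy_return //.
(* [window H 0 Rw w j] reduces to the zero window. *)
by apply: integral_path_sum => // j s a; have [] := pi_policy j s (fun _ _ _ => 0).
Qed.

Lemma opt_value_le_total_mean L : (opt_value H Pr mu P L Rw <= total_mean%:E)%E.
Proof.
by apply: ge_ereal_sup => _ [pi pi_admissible <-]; exact: value_le_total_mean.
Qed.

Lemma opt_value_ge_uniform L :
  (((#|A|%:R)^-1 * total_mean)%:E <= opt_value H Pr mu P L Rw)%E.
Proof.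
rewrite -(value_uniform_policy L); apply: ereal_sup_ubound.
by exists uniform_policy => //; exact: uniform_policy_admissible.
Qed.

Lemma competitive_ratio_ge L :
  (((#|A|%:R)^-1)%:E <= eratio (opt_value H Pr mu P 0 Rw) (opt_value H Pr mu P L Rw))%E.
Proof.
rewrite /eratio; case: eqP => [_|/eqP optL_neq0]; first exact: leey.
have c_ge0 : 0 <= (#|A|%:R)^-1 :> R by rewrite invr_ge0.
have total_ge0 : 0 <= total_mean by exact: path_sum_ge0.
have opt0_ge := opt_value_ge_uniform 0.
have := opt_value_le_total_mean L; have := opt_value_ge_uniform L.
move: optL_neq0; case: (opt_value H Pr mu P L Rw) => [v| |] //.
rewrite eqe => v_neq0 v_ge; rewrite lee_fin => v_le.
have v_gt0 : 0 < v.
  by rewrite lt_def v_neq0 -lee_fin; apply: le_trans v_ge; rewrite lee_fin mulr_ge0.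
rewrite inver (negbTE v_neq0).
apply: le_trans _ (lee_wpmul2r _ opt0_ge); last by rewrite lee_fin invr_ge0 ltW.
rewrite -EFinM lee_fin -mulrA; apply: ler_peMr => //.
by rewrite ler_pdivlMr // mul1r.
Qed.

End reward_model.

Section guessing_game.
Hypothesis H_gt0 : (0 < H)%N.
Local Notation guess_prob := (uniform_ord_prob R #|A|.-1).

Definition guess_reward (h : nat) (s : S) (a : A) (w : nat) : R :=
  if (h == 0%N) && (w == enum_rank a) then #|A|%:R else 0.

Definition guess_mean (h : nat) (s : S) (a : A) : R := if h == 0%N then 1 else 0.

Lemma guess_reward_model : reward_model H guess_prob guess_reward guess_mean.
Proof.
split=> [h s a _ _ Y _ //|h s a w _|h s a _|B _].
- by rewrite /guess_reward; case: ifP.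
- rewrite integral_uniform_ord_prob => [|w]; last by rewrite /guess_reward; case: ifP.
  rewrite /guess_reward /guess_mean -big_distrr /=; case: eqP => _ /=; last first.
    by rewrite big1 ?mulr0.
  rewrite -big_mkcond (big_ord1_eq _ (fun _ => #|A|%:R)) prednK // ltn_ord.
  by rewrite mulVf // pnatr_eq0 -lt0n.
- apply: (@probability_prod_trivial _ _ _ guess_prob _
    (fun h => [set w | forall s a, B h s a (guess_reward h s a w)]) (Ordinal H_gt0)).
  move=> h h_neq0; have reward0 s a w : guess_reward h s a w = 0.
    by rewrite -(inj_eq val_inj) /= in h_neq0; rewrite /guess_reward (negbTE h_neq0).
  have [B0|B0] := pselect (forall s a, B h s a 0); [left|right].
    by apply/seteqP; split=> w //= _ s a; rewrite reward0.
  by apply/seteqP; split=> w //= Bw; apply: B0 => s a; rewrite -(reward0 s a w).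
Qed.

(* [W 0 s] is the current reward vector [R_h(s, .)]. *)
Definition greedy_policy : policy R S A := fun _ s W a =>
  if a == odflt a0 [pick b | W 0%N s b != 0] then 1 else 0.

Lemma greedy_policy_admissible L : admissible H L guess_reward greedy_policy.
Proof.
split=> [h s W|h s a _ _ Y _ //]; split=> [a|].
  by rewrite /greedy_policy; case: ifP.
by rewrite /greedy_policy -big_mkcond big_pred1_eq.
Qed.

Local Notation total_path_weight := (\sum_(sg : {ffun 'I_H -> S}) path_weight sg).

Lemma policy_return_greedy_ge L k : (0 < L)%N -> (k < #|A|)%N ->
  total_path_weight * #|A|%:R <= policy_return L guess_reward greedy_policy k.
Proof.
move=> L_gt0 k_lt; rewrite /policy_return /path_sum big_distrl /=.
apply: ler_sum => sg _; rewrite ler_wpM2l ?path_weight_ge0 //.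
set W := window H L guess_reward k 0.
have W0 s b : W 0%N s b = guess_reward 0 s b k by rewrite /W /window L_gt0 H_gt0.
set s0 := sg (Ordinal H_gt0); set b := odflt a0 [pick b | W 0%N s0 b != 0].
have reward_b : guess_reward 0 s0 b k = #|A|%:R.
  rewrite /b; case: pickP => [b'|none] /=.
    by rewrite W0 /guess_reward; case: ifP => // _ /eqP.
  have := none (enum_val (Ordinal k_lt)).
  by rewrite W0 /guess_reward enum_valK /= eqxx pnatr_eq0 -lt0n A_gt0.
rewrite (bigD1 (Ordinal H_gt0)) //= -[X in X <= _]addr0 lerD //; last first.
  apply: sumr_ge0 => j _; apply: sumr_ge0 => a _; apply: mulr_ge0.
    by rewrite /greedy_policy; case: ifP.
  by rewrite /guess_reward; case: ifP.
rewrite (bigD1 b) //= /greedy_policy eqxx mul1r reward_b big1 ?addr0 // => a.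
by move=> /negbTE ->; rewrite mul0r.
Qed.

Lemma opt_value_guess_no_lookahead :
  (opt_value H guess_prob mu P 0 guess_reward <= total_path_weight%:E)%E.
Proof.
apply: ge_ereal_sup => _ [pi pi_admissible <-].
rewrite (value_no_lookahead guess_reward_model) // path_sum_action_free; last first.
  by move=> j s; case: pi_admissible => /(_ j s (fun _ _ _ => 0)) [].
under eq_bigr do rewrite -big_mkcond (big_ord1_eq _ (fun _ => 1)) H_gt0 /= mulr1.
by [].
Qed.

Lemma opt_value_guess_lookahead L : (0 < L)%N ->
  ((total_path_weight * #|A|%:R)%:E <= opt_value H guess_prob mu P L guess_reward)%E.
Proof.
move=> L_gt0; have [greedy_policy_is_policy _] := greedy_policy_admissible L.
apply: le_trans (ereal_sup_ubound _); last first.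
  by exists greedy_policy => //; exact: greedy_policy_admissible.
rewrite value_policy_return //.
rewrite integral_uniform_ord_prob => [|k]; last first.
  apply: path_sum_ge0 => j s a; first by have [] := greedy_policy_is_policy j s
    (window H L guess_reward k j).
  by rewrite /guess_reward; case: ifP.
have -> : total_path_weight * #|A|%:R =
    \sum_(k < #|A|.-1.+1) #|A|.-1.+1%:R^-1 * (total_path_weight * #|A|%:R).
  rewrite sumr_const card_ord -(mulr_natl (_ * (total_path_weight * _))).
  by rewrite mulrA mulfV ?mul1r // pnatr_eq0.
rewrite lee_fin; apply: ler_sum => k _; rewrite ler_wpM2l ?invr_ge0 //.
apply: policy_return_greedy_ge => //.
by apply: leq_trans (ltn_ord k) _; rewrite prednK.
Qed.

Lemma competitive_ratio_guess_le L : (0 < L)%N -> is_distr mu -> is_kernel H P ->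
  (eratio (opt_value H guess_prob mu P 0 guess_reward)
          (opt_value H guess_prob mu P L guess_reward) <= ((#|A|%:R)^-1)%:E)%E.
Proof.
move=> L_gt0 mu_distr P_kernel.
have weight_gt0 : 0 < total_path_weight by exact: sum_path_weight_gt0.
have lookahead_gt0 : 0 < total_path_weight * #|A|%:R by rewrite mulr_gt0 ?ltr0n.
have := opt_value_guess_lookahead L_gt0.
have := opt_value_le_total_mean guess_reward_model L.
case: (opt_value H guess_prob mu P L guess_reward) => [v| |] // _.
rewrite lee_fin => v_ge.
have v_gt0 : 0 < v by exact: lt_le_trans v_ge.
rewrite /eratio eqe gt_eqF // inver gt_eqF //.
apply: le_trans (lee_wpmul2r _ opt_value_guess_no_lookahead) _.
  by rewrite lee_fin invr_ge0 ltW.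
by rewrite -EFinM lee_fin ler_pdivrMr // ler_pdivlMl ?ltr0n // mulrC.
Qed.

End guessing_game.

End action_independent_mdp.

Theorem mainTheorem7 (R : realType) (S A : finType) (H : nat)
  (mu : S -> R) (P : nat -> S -> A -> S -> R) (L : nat) :
  is_distr mu -> is_kernel H P -> action_independent H P ->
  (0 < #|A|)%N -> (1 <= L <= H)%N ->
  CR H L mu P = ((#|A|%:R : R)^-1)%:E.
Proof.
move=> mu_distr P_kernel P_indep A_gt0 /andP[L_gt0 L_le_H].
have [a0 _] := card_gt0P A_gt0.
have mu_ge0 : forall s, 0 <= mu s by case: mu_distr.
have P_ge0 h : (h < H)%N -> forall s a s', 0 <= P h s a s'.
  by move=> hH s a s'; have [] := P_kernel h hH s a.
have H_gt0 := leq_trans L_gt0 L_le_H.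
apply/eqP; rewrite eq_le; apply/andP; split.
- apply: ge_ereal_inf; exists (CR_r H L mu P (@guess_mean R S A)).
    exists (@guess_mean R S A); split=> // h s a _.
    by rewrite /guess_mean; case: ifP; rewrite ler01 lexx.
  apply: ge_ereal_inf; eexists.
    exists _, _, (uniform_ord_prob R #|A|.-1), (@guess_reward R S A); split=> //.
    exact: guess_reward_model A_gt0 H_gt0.
  exact: competitive_ratio_guess_le a0 mu_ge0 P_ge0 P_indep A_gt0 H_gt0 L L_gt0
    mu_distr P_kernel.
- apply: le_ereal_inf_tmp => _ [r [_ ->]].
  apply: le_ereal_inf_tmp => _ [d [Om [Pr [Rw [Rw_model ->]]]]].
  exact: competitive_ratio_ge a0 mu_ge0 P_ge0 P_indep A_gt0 _ _ _ _ _ Rw_model L.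
Qed.
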